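(* Let $\gamma$ be a cocycle. Then (i) $|\gamma^{dom}(\lambda)|\ge1$ for every $\lambda\in\Lambda$; (ii) $|\gamma^{dom}(\lambda\mu)|\le|\gamma^{dom}(\lambda)|\,|\gamma^{dom}(\mu)|$ for all $\lambda,\mu\in\Lambda$.
   Context: $L$ is a finite extension of $\mathbb{Q}_p$, $K$ a complete extension field of $\mathbb{Q}_p$ containing $L$ with absolute value $|\ |$; $|\ |_L$ normalized absolute value of $L$. $G$ is the $L$-points of an $L$-split connected reductive group, $T$ a maximal $L$-split torus, $P$ a Borel subgroup containing $T$, $W=N(T)/T$, $U_0$ a maximal compact subgroup special with respect to $T$, $\Lambda=T/(U_0\cap T)$ (written multiplicatively), $\lambda:T\to\Lambda$ the projection, $W$ acting on $\Lambda$ by conjugation (${}^w\lambda$). $T^{--}=\{t:|\alpha(t)|_L\ge1$ for all roots $\alpha$ positive for $P\}$, $\Lambda^{--}=\lambda(T^{--})$. A cocycle is $\gamma:W\times\Lambda\to K^\times$ with (a) $\gamma(w,\lambda\mu)=\gamma(w,\lambda)\gamma(w,\mu)$; (b) $\gamma(vw,\lambda)=\gamma(v,{}^w\lambda)\gamma(w,\lambda)$; (c) $|\gamma(w,\lambda)|\le1$ for $\lambda\in\Lambda^{--}$; (d) $\gamma(w,\lambda)=1$ if ${}^w\lambda=\lambda$. $\gamma^{dom}(\lambda):=\gamma(w,\lambda)$ for any $w\in W$ with ${}^w\lambda\in\Lambda^{--}$ (well defined by (d)). *)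

From HB Require Import structures.
From mathcomp Require Import all_boot all_order all_algebra all_fingroup.
Set Implicit Arguments. Unset Strict Implicit. Unset Printing Implicit Defensive.
Import Order.TTheory GRing.Theory Num.Theory.
Local Open Scope ring_scope.

(* W : finite group (the Weyl group N(T)/T), Lambda : abelian group
   T/(U_0 ∩ T), written ADDITIVELY here (the paper writes it
   multiplicatively: lambda*mu in the paper is  l + m  here).
   act w l  is  ^w lambda  (a left action by group automorphisms). *)
Definition is_Waction (W : finGroupType) (Lam : zmodType) (act : W -> Lam -> Lam) :=
  [/\ forall l, act 1%g l = l,
      forall (v w : W) l, act (v * w)%g l = act v (act w l)
    & forall w, {morph act w : x y / x + y}].

Definition is_fundamental_domain (W : finGroupType) (Lam : zmodType)
    (act : W -> Lam -> Lam) (dom : pred Lam) :=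
  (forall l, exists w, dom (act w l)) /\
  (forall l (v w : W), dom (act v l) -> dom (act w l) -> act v l = act w l).

Definition is_absval (K : fieldType) (R : realFieldType) (abs : K -> R) :=
  [/\ forall x, 0 <= abs x,
      forall x, abs x = 0 <-> x = 0,
      forall x y, abs (x * y) = abs x * abs y
    & forall x y, abs (x + y) <= Num.max (abs x) (abs y)].

Definition is_cocycle (W : finGroupType) (Lam : zmodType) (K : fieldType)
    (R : realFieldType) (act : W -> Lam -> Lam) (dom : pred Lam)
    (abs : K -> R) (gamma : W -> Lam -> K) :=
  [/\ forall w l, gamma w l != 0,
      forall w l m, gamma w (l + m) = gamma w l * gamma w m,
      forall (v w : W) l, gamma (v * w)%g l = gamma v (act w l) * gamma w l,
      forall w l, dom l -> abs (gamma w l) <= 1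
    & forall w l, act w l = l -> gamma w l = 1].

Definition gamma_dom (W : finGroupType) (Lam : zmodType) (K : fieldType)
    (act : W -> Lam -> Lam) (dom : pred Lam) (gamma : W -> Lam -> K) (l : Lam) : K :=
  match [pick w : W | dom (act w l)] with
  | Some w => gamma w l
  | None => 1
  end.

From HB Require Import structures.
From mathcomp Require Import all_boot all_order all_algebra all_fingroup.
Import Order.TTheory GRing.Theory Num.Theory.
Local Open Scope ring_scope.

(* If [^v lambda] is dominant, the cocycle relation gives
   [gamma(w, lambda) = gamma(w v^-1, ^v lambda) gamma(v, lambda)], and the first
   factor has absolute value at most 1.  Hence [|gamma^dom(lambda)|] is the
   maximum of [|gamma(w, lambda)|] over [w]: taking [w = 1] gives (i), and
   evaluating at the [w] that makes [lambda mu] dominant and using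
   multiplicativity in [lambda] gives (ii). *)

Lemma absval1 {K : fieldType} {R : realFieldType} {abs : K -> R} :
  is_absval abs -> abs 1 = 1.
Proof.
case=> _ abs_eq0 absM _.
have abs1_neq0 : abs 1 != 0 by apply/eqP => /abs_eq0/eqP; rewrite oner_eq0.
by apply: (mulfI abs1_neq0); rewrite -absM !mulr1.
Qed.

Section DominantCocycle.

Variables (W : finGroupType) (Lam : zmodType) (K : fieldType) (R : realFieldType).
Variables (act : W -> Lam -> Lam) (dom : pred Lam) (abs : K -> R).
Variable gamma : W -> Lam -> K.
Hypothesis Hact : is_Waction act.
Hypothesis Hdom : is_fundamental_domain act dom.
Hypothesis Habs : is_absval abs.
Hypothesis Hgamma : is_cocycle act dom abs gamma.

Local Notation gdom := (gamma_dom act dom gamma).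

Lemma gamma_domP (l : Lam) : exists2 w, dom (act w l) & gdom l = gamma w l.
Proof.
rewrite /gamma_dom; case: pickP => [w dom_wl | no_w]; first by exists w.
by case: Hdom => /(_ l) [w dom_wl] _; move: (no_w w); rewrite dom_wl.
Qed.

Lemma cocycle1 (l : Lam) : gamma 1%g l = 1.
Proof. by case: Hgamma => _ _ _ _ ->; case: Hact. Qed.

Lemma abs_gamma_le_dom (w : W) (l : Lam) : abs (gamma w l) <= abs (gdom l).
Proof.
have [v dom_vl ->] := gamma_domP l.
case: Habs => abs_ge0 _ absM _; case: Hgamma => _ _ gammaM gamma_dom_le1 _.
have -> : w = (w * v^-1 * v)%g by rewrite -mulgA mulVg mulg1.
rewrite gammaM absM -[leRHS]mul1r.
by apply: ler_wpM2r; [exact: abs_ge0 | exact: gamma_dom_le1].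
Qed.

Lemma abs_gamma_dom_ge1 (l : Lam) : 1 <= abs (gdom l).
Proof. by rewrite -(absval1 Habs) -(cocycle1 l) abs_gamma_le_dom. Qed.

Lemma abs_gamma_domD_le (l m : Lam) :
  abs (gdom (l + m)) <= abs (gdom l) * abs (gdom m).
Proof.
have [w _ ->] := gamma_domP (l + m).
case: Habs => abs_ge0 _ absM _; case: Hgamma => _ gammaD _ _ _.
by rewrite gammaD absM ler_pM ?abs_ge0 ?abs_gamma_le_dom.
Qed.

End DominantCocycle.

Theorem lemma2p1 (W : finGroupType) (Lam : zmodType) (K : fieldType)
    (R : realFieldType) (act : W -> Lam -> Lam) (dom : pred Lam)
    (abs : K -> R) (gamma : W -> Lam -> K)
    (Hact : is_Waction act) (Hdom : is_fundamental_domain act dom)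
    (Habs : is_absval abs) (Hgamma : is_cocycle act dom abs gamma) :
  (forall l : Lam, 1 <= abs (gamma_dom act dom gamma l)) /\
  (forall l m : Lam, abs (gamma_dom act dom gamma (l + m))
                     <= abs (gamma_dom act dom gamma l) * abs (gamma_dom act dom gamma m)).
Proof.
split; first exact: abs_gamma_dom_ge1.
exact: abs_gamma_domD_le.
Qed.
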